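(* Assume the setting described in the context. There is a generalized $C$-sequence $\langle e^m_\alpha:\alpha<\lambda,m<\omega\rangle$ on $\lambda$ such that for all $\alpha<\lambda$ and $m<\omega$: (1) $|e^m_\alpha|\leq\mathrm{cf}(\alpha)+\mu_m^+$, and (2) if $\delta\in S\cap e^m_\alpha$ then $C_\delta[m]\subseteq e^m_\alpha$.
   Context: Setting: $\mu$ is a singular cardinal with $\mathrm{cf}(\mu)=\aleph_0$, $\lambda=\mu^+$, $\sigma$ is regular with $\aleph_0<\sigma<\mu$, $S$ is a stationary subset of $\{\delta<\lambda:\mathrm{cf}(\delta)=\sigma\}$, and $\langle\mu_i:i<\omega\rangle$ is a strictly increasing sequence of regular cardinals cofinal in $\mu$ with $\sigma<\mu_0$. For $\delta\in S$, $c^0_\delta$ is the increasing enumeration of a club subset of $\delta$ of order type $\sigma$, and for every club $E\subseteq\lambda$ the set of $\delta\in S$ with $\mathrm{ran}(c^0_\delta)\subseteq E$ is stationary. $I(\delta,\epsilon,m)=(c^0_\delta(\omega\cdot\epsilon+m),c^0_\delta(\omega\cdot\epsilon+m+1)]$ for $\epsilon<\sigma$, $m<\omega$. $\langle C_\delta:\delta\in S\rangle$ satisfies: $C_\delta$ club in $\delta$; $\mathrm{ran}(c^0_\delta)\subseteq C_\delta$; $|C_\delta\cap I(\delta,\epsilon,m)|\leq\mu_m^+$; every $\alpha\in\mathrm{nacc}(C_\delta)\cap I(\delta,\epsilon,m)$ has $\mathrm{cf}(\alpha)>\mu_m^+$; for every club $E\subseteq\lambda$ there are stationarily many $\delta\in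 S$ with $E\cap\mathrm{nacc}(C_\delta)\cap I(\delta,\epsilon,m)\neq\emptyset$ for all $\epsilon,m$. ($\mathrm{nacc}(C)=C\setminus\{\alpha:\alpha=\sup(\alpha\cap C)\}$.) $C_\delta[m]=\mathrm{ran}(c^0_\delta)\cup\bigcup\{C_\delta\cap I(\delta,\epsilon,i):\epsilon<\sigma, i\leq m\}$. A generalized $C$-sequence on $\lambda$ is a family $\langle e^m_\alpha:\alpha<\lambda,m<\omega\rangle$ such that each $e^m_\alpha$ is closed unbounded in $\alpha$ and $e^m_\alpha\subseteq e^{m+1}_\alpha$. *)

Set Implicit Arguments.
(* The ordinals < lambda are modelled by an arbitrary type T equipped with a
   strict well-order lt (every well-order is isomorphic to an ordinal, and all
   notions below are invariant under isomorphism).  Cardinals, cofinalities,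
   etc. that are < lambda are represented by elements of T (as von Neumann
   initial ordinals). *)

Section Ordinals.
Variable T : Type.
Variable lt : T -> T -> Prop.

Definition le (a b : T) : Prop := lt a b \/ a = b.

Definition strict_well_order : Prop :=
  (forall a, ~ lt a a) /\
  (forall a b c, lt a b -> lt b c -> lt a c) /\
  (forall a b, lt a b \/ a = b \/ lt b a) /\
  well_founded lt.

Definition below (a : T) : T -> Prop := fun b => lt b a.

Definition card_le (A B : T -> Prop) : Prop :=
  exists f : T -> T, (forall x, A x -> B (f x)) /\
    (forall x y, A x -> A y -> f x = f y -> x = y).

Definition is_card (k : T) : Prop :=
  forall b, lt b k -> ~ card_le (below k) (below b).

Definition csucc (k nu : T) : Prop :=
  ~ card_le (below nu) (below k) /\
  (forall b, lt b nu -> card_le (below b) (below k)).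

Definition card_le_sum (X : T -> Prop) (k nu : T) : Prop :=
  exists X1 X2 : T -> Prop, (forall x, X x -> X1 x \/ X2 x) /\
    card_le X1 (below k) /\ card_le X2 (below nu).

Definition cofinal_in (a : T) (X : T -> Prop) : Prop :=
  (forall x, X x -> lt x a) /\ (forall b, lt b a -> exists g, X g /\ le b g).

Definition is_cf (a k : T) : Prop :=
  (exists X, cofinal_in a X /\ card_le X (below k)) /\
  (forall k', lt k' k -> ~ exists X, cofinal_in a X /\ card_le X (below k')).

Definition regular (k : T) : Prop := is_cf k k.

Definition sup_self (X : T -> Prop) (x : T) : Prop :=
  forall b, lt b x -> exists g, X g /\ lt b g /\ lt g x.

Definition nacc (X : T -> Prop) (x : T) : Prop := X x /\ ~ sup_self X x.

Definition club_in (a : T) (X : T -> Prop) : Prop :=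
  cofinal_in a X /\
  (forall x, lt x a -> (exists b, lt b x) -> sup_self X x -> X x).

Definition club (E : T -> Prop) : Prop :=
  (forall a, exists b, lt a b /\ E b) /\
  (forall x, (exists b, lt b x) -> sup_self E x -> E x).

Definition stationary (S : T -> Prop) : Prop :=
  forall E, club E -> exists d, S d /\ E d.

Definition uncountable (k : T) : Prop :=
  ~ exists f : T -> nat, forall x y, lt x k -> lt y k -> f x = f y -> x = y.

Definition is_succ (x y : T) : Prop := lt x y /\ forall r, lt x r -> le y r.

Fixpoint iter_succ (m : nat) (x y : T) : Prop :=
  match m with
  | O => y = x
  | S m' => exists z, iter_succ m' x z /\ is_succ z y
  end.

Definition lim_or_zero (x : T) : Prop := ~ exists z, is_succ z x.

Definition order_iso (A B : T -> Prop) : Prop :=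
  exists f : T -> T, (forall x, A x -> B (f x)) /\
    (forall x y, A x -> A y -> lt x y -> lt (f x) (f y)) /\
    (forall y, B y -> exists x, A x /\ f x = y).

(* z = omega * eps + m (ordinal arithmetic): omega*eps is the eps-th
   element of the class of zero-or-limit ordinals *)
Definition omega_mul_add (eps : T) (m : nat) (z : T) : Prop :=
  exists eta, lim_or_zero eta /\
    order_iso (fun x => lt x eta /\ lim_or_zero x) (below eps) /\
    iter_succ m eta z.

Definition inI (c0 : T -> T -> T) (d eps : T) (m : nat) (x : T) : Prop :=
  exists z z', omega_mul_add eps m z /\ omega_mul_add eps (S m) z' /\
    lt (c0 d z) x /\ le x (c0 d z').

Definition Cm (sigma : T) (c0 : T -> T -> T) (C : T -> T -> Prop)
    (d : T) (m : nat) (x : T) : Prop :=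
  (exists z, lt z sigma /\ x = c0 d z) \/
  (exists eps i, lt eps sigma /\ i <= m /\ C d x /\ inI c0 d eps i x).

End Ordinals.

(* e^m_α is the closure of a cofinal subset of α of size cf(α) under the
   operation δ ↦ C_δ[m] (for δ ∈ S), iterated ω times with a topological
   closure after each round, followed by a final closure.  Since cf(δ) = σ > ω,
   a δ ∈ S that is a limit of the union of the rounds is already a limit, hence
   a member, of a single round, so C_δ[m] is swallowed by the next round.
   Each C_δ[m] has size ≤ σ·ω·μ_m^+ = μ_m^+, and closures, pairs and countable
   unions do not raise an infinite cardinal κ (Hessenberg: κ·κ = κ), so
   |e^m_α| ≤ max(cf(α), μ_m^+).  Seeding round 0 of e^{m+1}_α with e^m_α makes
   the sequence increasing in m. *)

From Stdlib Require Import Classical ClassicalEpsilon.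
From Stdlib Require Import FunctionalExtensionality PropExtensionality Arith Lia.

Definition injects {I J : Type} (A : I -> Prop) (B : J -> Prop) : Prop :=
  exists g : I -> J, (forall x, A x -> B (g x)) /\
    (forall x y, A x -> A y -> g x = g y -> x = y).

Lemma injects_refl {I} (A : I -> Prop) : injects A A.
Proof. exists (fun x => x); auto. Qed.

Lemma injects_trans {I J K} (A : I -> Prop) (B : J -> Prop) (C : K -> Prop) :
  injects A B -> injects B C -> injects A C.
Proof.
  intros [g [g1 g2]] [h [h1 h2]]; exists (fun x => h (g x)); split; auto.
Qed.

Lemma injects_subset_l {I J} (A A' : I -> Prop) (B : J -> Prop) :
  (forall x, A x -> A' x) -> injects A' B -> injects A B.
Proof. intros H [g [g1 g2]]; exists g; split; auto. Qed.

Lemma injects_subset_r {I J} (A : I -> Prop) (B B' : J -> Prop) :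
  (forall x, B x -> B' x) -> injects A B -> injects A B'.
Proof. intros H [g [g1 g2]]; exists g; split; auto. Qed.

Lemma injects_prod {I J} (A A' : I -> Prop) (B B' : J -> Prop) :
  injects A B -> injects A' B' ->
  injects (fun q : I * I => A (fst q) /\ A' (snd q))
          (fun q : J * J => B (fst q) /\ B' (snd q)).
Proof.
  intros [g [g1 g2]] [h [h1 h2]].
  exists (fun q => (g (fst q), h (snd q))); split.
  - intros [x y] [H1 H2]; simpl; auto.
  - intros [x y] [x' y'] [H1 H2] [H3 H4] E; simpl in *.
    injection E; intros; f_equal; auto.
Qed.

Section WellOrder.
Variables (T : Type) (lt : T -> T -> Prop).
Hypothesis lt_wo : strict_well_order lt.

Lemma lt_irrefl a : ~ lt a a.
Proof. apply lt_wo. Qed.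

Lemma lt_trans a b c : lt a b -> lt b c -> lt a c.
Proof. apply lt_wo. Qed.

Lemma lt_trichotomy a b : lt a b \/ a = b \/ lt b a.
Proof. apply lt_wo. Qed.

Lemma lt_wf : well_founded lt.
Proof. apply lt_wo. Qed.

Lemma le_refl a : le lt a a.
Proof. now right. Qed.

Lemma le_lt_trans a b c : le lt a b -> lt b c -> lt a c.
Proof. intros [H|<-] H2; [eapply lt_trans; eauto | auto]. Qed.

Lemma lt_le_trans a b c : lt a b -> le lt b c -> lt a c.
Proof. intros H [H2|<-]; [eapply lt_trans; eauto | auto]. Qed.

Lemma le_trans a b c : le lt a b -> le lt b c -> le lt a c.
Proof. intros [H|<-] H2; [left; eapply lt_le_trans; eauto | auto]. Qed.

Lemma not_lt_le a b : ~ lt a b -> le lt b a.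
Proof.
  intros H; destruct (lt_trichotomy a b) as [H1|[->|H1]];
    [tauto | apply le_refl | now left].
Qed.

Lemma lt_neq a b : lt a b -> a <> b.
Proof. intros H ->; exact (lt_irrefl _ H). Qed.

Lemma below_mono a b x : le lt a b -> below lt a x -> below lt b x.
Proof. unfold below; intros; eapply lt_le_trans; eauto. Qed.

Lemma injects_below_mono {I} (A : I -> Prop) a b :
  le lt a b -> injects A (below lt a) -> injects A (below lt b).
Proof. intros H; apply injects_subset_r; intros; eapply below_mono; eauto. Qed.

Lemma least_exists (P : T -> Prop) x :
  P x -> exists y, P y /\ forall z, P z -> ~ lt z y.
Proof.
  induction x as [x IH] using (well_founded_ind lt_wf); intros Px.
  destruct (classic (exists z, P z /\ lt z x)) as [[z [Pz Hz]]|Hn].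
  - exact (IH z Hz Pz).
  - exists x; split; auto. intros z Pz Hz; apply Hn; eauto.
Qed.

Definition max_ord (a b : T) : T :=
  if excluded_middle_informative (lt a b) then b else a.

Lemma max_ord_ge_l a b : le lt a (max_ord a b).
Proof.
  unfold max_ord; destruct excluded_middle_informative; [now left | apply le_refl].
Qed.

Lemma max_ord_ge_r a b : le lt b (max_ord a b).
Proof.
  unfold max_ord; destruct excluded_middle_informative; [apply le_refl | now apply not_lt_le].
Qed.

Lemma max_ord_cases a b : max_ord a b = a \/ max_ord a b = b.
Proof. unfold max_ord; destruct excluded_middle_informative; auto. Qed.

Lemma max_ord_lt a b c : lt a c -> lt b c -> lt (max_ord a b) c.
Proof. intros; destruct (max_ord_cases a b) as [->| ->]; auto. Qed.

Lemma max_ord_mono_r a b b' : le lt b b' -> le lt (max_ord a b) (max_ord a b').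
Proof.
  intros Hb; destruct (max_ord_cases a b) as [->| ->].
  - apply max_ord_ge_l.
  - eapply le_trans; [exact Hb | apply max_ord_ge_r].
Qed.

(** * The first ω elements *)

Variable sigma : T.
Hypothesis sigma_uncountable : uncountable lt sigma.

(* Junk when P is empty; sigma only serves as an inhabitant of T. *)
Definition least (P : T -> Prop) : T :=
  epsilon (inhabits sigma) (fun y => P y /\ forall z, P z -> ~ lt z y).

Lemma least_spec P : (exists x, P x) -> P (least P) /\ forall z, P z -> ~ lt z (least P).
Proof.
  intros [x Px]; apply (epsilon_spec (inhabits sigma) (fun y => P y /\ forall z, P z -> ~ lt z y)).
  exact (least_exists P x Px).
Qed.

Lemma least_le P x : P x -> le lt (least P) x.
Proof. intros Px; apply not_lt_le, (least_spec P); eauto. Qed.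

Fixpoint nth_ord (n : nat) : T :=
  match n with
  | O => least (fun _ => True)
  | S n => least (lt (nth_ord n))
  end.

Lemma not_below_sigma_countable : ~ forall x, lt x sigma -> exists i, x = nth_ord i.
Proof.
  intros H; apply sigma_uncountable.
  exists (fun x => epsilon (inhabits 0) (fun i => x = nth_ord i)).
  intros x y Hx Hy E.
  rewrite (epsilon_spec (inhabits 0) (fun i => x = nth_ord i) (H x Hx)),
          (epsilon_spec (inhabits 0) (fun i => y = nth_ord i) (H y Hy)), E; reflexivity.
Qed.

Lemma nth_ord_props n : lt (nth_ord n) sigma /\
  (forall x, lt x (nth_ord n) -> exists i, i < n /\ x = nth_ord i) /\
  (forall i, i < n -> lt (nth_ord i) (nth_ord n)).
Proof.
  induction n as [|n [IH1 [IH2 IH3]]]; simpl.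
  - destruct (least_spec (fun _ : T => True)) as [_ H]; [now exists sigma|].
    split; [|split; [intros x Hx; exfalso; eapply H; eauto | lia]].
    destruct (lt_trichotomy (least (fun _ => True)) sigma) as [H1|[H1|H1]]; auto.
    + exfalso; apply not_below_sigma_countable.
      intros x Hx; rewrite <- H1 in Hx; exfalso; eapply H; eauto.
    + exfalso; eapply H; eauto.
  - assert (Hnext : exists t, lt (nth_ord n) t /\ lt t sigma).
    { apply NNPP; intros Hn; apply not_below_sigma_countable; intros x Hx.
      destruct (lt_trichotomy x (nth_ord n)) as [H1|[H1|H1]].
      - destruct (IH2 x H1) as [i [_ Hi]]; eauto.
      - eauto.
      - exfalso; apply Hn; eauto. }
    destruct Hnext as [t [Ht1 Ht2]].
    destruct (least_spec (lt (nth_ord n))) as [Hs1 Hs2]; [eauto|].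
    split; [|split].
    + eapply le_lt_trans; [apply least_le; exact Ht1 | exact Ht2].
    + intros x Hx; destruct (lt_trichotomy x (nth_ord n)) as [H1|[H1|H1]].
      * destruct (IH2 x H1) as [i [Hi ->]]; exists i; split; auto.
      * exists n; auto.
      * exfalso; eapply Hs2; eauto.
    + intros i Hi; destruct (Nat.eq_dec i n) as [->|Hne]; auto.
      eapply lt_trans; [apply IH3; lia | auto].
Qed.

Lemma nth_ord_lt_mono i j : i < j -> lt (nth_ord i) (nth_ord j).
Proof. apply nth_ord_props. Qed.

Lemma nth_ord_inj i j : nth_ord i = nth_ord j -> i = j.
Proof.
  intros E; destruct (Nat.lt_trichotomy i j) as [H|[H|H]]; auto;
    apply nth_ord_lt_mono in H; rewrite E in H; destruct (lt_irrefl _ H).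
Qed.

Definition omega_ord : T := least (fun t => forall n, t <> nth_ord n).

Lemma omega_ord_exists : exists t, lt t sigma /\ forall n, t <> nth_ord n.
Proof.
  apply NNPP; intros Hn; apply not_below_sigma_countable; intros x Hx.
  apply NNPP; intros Hx2; apply Hn; exists x; split; auto.
  intros n E; apply Hx2; eauto.
Qed.

Lemma omega_ord_spec : (forall n, omega_ord <> nth_ord n) /\
  forall z, (forall n, z <> nth_ord n) -> ~ lt z omega_ord.
Proof.
  apply (least_spec (fun t => forall n, t <> nth_ord n)).
  destruct omega_ord_exists as [t [_ Ht]]; eauto.
Qed.

Lemma omega_lt_sigma : lt omega_ord sigma.
Proof.
  destruct omega_ord_exists as [t [Ht1 Ht2]].
  eapply le_lt_trans; [apply least_le; exact Ht2 | exact Ht1].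
Qed.

Lemma below_omega x : lt x omega_ord <-> exists n, x = nth_ord n.
Proof.
  split.
  - intros H; apply NNPP; intros Hn; eapply (proj2 omega_ord_spec); [|exact H].
    intros n E; apply Hn; eauto.
  - intros [n ->]; destruct (lt_trichotomy (nth_ord n) omega_ord) as [H|[H|H]]; auto.
    + exfalso; eapply (proj1 omega_ord_spec); eauto.
    + destruct (proj1 (proj2 (nth_ord_props n)) omega_ord H) as [i [_ Hi]].
      exfalso; eapply (proj1 omega_ord_spec); eauto.
Qed.

Lemma nth_ord_lt_omega n : lt (nth_ord n) omega_ord.
Proof. apply below_omega; eauto. Qed.

Lemma nat_injects_omega (A : nat -> Prop) : injects A (below lt omega_ord).
Proof.
  exists nth_ord; split; [intros; apply nth_ord_lt_omega | intros; now apply nth_ord_inj].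
Qed.

Definition ord_index (x : T) : nat := epsilon (inhabits 0) (fun n => x = nth_ord n).

Lemma ord_index_spec x : lt x omega_ord -> x = nth_ord (ord_index x).
Proof. intros Hx; apply (epsilon_spec (inhabits 0) (fun n => x = nth_ord n)), below_omega, Hx. Qed.

(** * Hessenberg's theorem *)

Lemma below_nth_ord x n : lt x (nth_ord n) -> ord_index x < n /\ x = nth_ord (ord_index x).
Proof.
  intros Hx.
  assert (E : x = nth_ord (ord_index x)).
  { apply ord_index_spec; eapply lt_trans; [exact Hx | apply nth_ord_lt_omega]. }
  split; auto.
  destruct (Nat.lt_ge_cases (ord_index x) n) as [H|H]; auto.
  exfalso; rewrite E in Hx; apply Nat.lt_eq_cases in H as [H| ->].
  - apply nth_ord_lt_mono in H; apply (lt_irrefl (nth_ord n)); eapply lt_trans; eauto.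
  - exact (lt_irrefl _ Hx).
Qed.

Lemma finite_square_injects n :
  injects (fun q : T * T => lt (fst q) (nth_ord n) /\ lt (snd q) (nth_ord n))
          (below lt (nth_ord (n * n))).
Proof.
  exists (fun q => nth_ord (ord_index (fst q) * n + ord_index (snd q))); split.
  - intros [x y] [Hx Hy]; simpl in *.
    apply below_nth_ord in Hx as [Hx _]; apply below_nth_ord in Hy as [Hy _].
    apply nth_ord_lt_mono; nia.
  - intros [x y] [x' y'] [Hx Hy] [Hx' Hy'] E; simpl in *; apply nth_ord_inj in E.
    apply below_nth_ord in Hx as [Ix Ex], Hy as [Iy Ey], Hx' as [Ix' Ex'], Hy' as [Iy' Ey'].
    assert (Efst : ord_index x = ord_index x') by nia.
    assert (Esnd : ord_index y = ord_index y') by nia.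
    rewrite Ex, Ey, Ex', Ey', Efst, Esnd; reflexivity.
Qed.

(* The shift x ↦ 0, n ↦ n + 1 on ω ∪ {x}, identity elsewhere. *)
Lemma hilbert_hotel x : le lt omega_ord x -> injects (fun t => le lt t x) (below lt x).
Proof.
  intros Hx.
  set (code t := if excluded_middle_informative (t = x) then 0 else S (ord_index t)).
  set (special t := t = x \/ lt t omega_ord).
  assert (code_inj : forall t u, special t -> special u -> code t = code u -> t = u).
  { intros t u Ht Hu; unfold code.
    destruct excluded_middle_informative as [->|Htx];
      destruct excluded_middle_informative as [->|Hux]; try easy.
    intros E; injection E; intros Ei.
    destruct Ht as [|Ht]; [easy|]; destruct Hu as [|Hu]; [easy|].
    rewrite (ord_index_spec t Ht), (ord_index_spec u Hu), Ei; reflexivity. }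
  exists (fun t => if excluded_middle_informative (special t) then nth_ord (code t) else t).
  split.
  - intros t Ht; unfold below; destruct excluded_middle_informative as [Hs|Hs].
    + eapply lt_le_trans; [apply nth_ord_lt_omega | exact Hx].
    + destruct Ht as [Ht| ->]; [exact Ht | exfalso; apply Hs; now left].
  - intros t u _ _; destruct excluded_middle_informative as [Ht|Ht];
      destruct excluded_middle_informative as [Hu|Hu]; intros E.
    + apply code_inj; auto; now apply nth_ord_inj.
    + exfalso; apply Hu; right; rewrite <- E; apply nth_ord_lt_omega.
    + exfalso; apply Ht; right; rewrite E; apply nth_ord_lt_omega.
    + exact E.
Qed.

Lemma infinite_card_limit k x : is_card lt k -> le lt omega_ord k -> lt x k ->
  exists d, lt x d /\ lt d k.
Proof.
  intros Hk Hom Hx; apply NNPP; intros Hn.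
  destruct (classic (lt x omega_ord)) as [Hxo|Hxo].
  - apply below_omega in Hxo as [n ->]; apply Hn; exists (nth_ord (S n)); split.
    + apply nth_ord_lt_mono; lia.
    + eapply lt_le_trans; [apply nth_ord_lt_omega | exact Hom].
  - apply (Hk x Hx), (injects_subset_l _ (fun t => le lt t x)).
    + intros t Ht; apply not_lt_le; intros Hxt; apply Hn; eauto.
    + apply hilbert_hotel, not_lt_le, Hxo.
Qed.

Definition card_of (d : T) : T := least (fun b => injects (below lt d) (below lt b)).

Lemma injects_card_of d : injects (below lt d) (below lt (card_of d)).
Proof.
  apply (least_spec (fun b => injects (below lt d) (below lt b))); exists d; apply injects_refl.
Qed.

Lemma card_of_le d : le lt (card_of d) d.
Proof. apply least_le, injects_refl. Qed.

Lemma card_of_is_card d : is_card lt (card_of d).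
Proof.
  intros b Hb Hc; apply (least_spec (fun b => injects (below lt d) (below lt b))) with b.
  - exists d; apply injects_refl.
  - eapply injects_trans; [apply injects_card_of | exact Hc].
  - exact Hb.
Qed.

Section Rank.
Context {U : Type} {R : U -> U -> Prop}.
Hypotheses (R_wf : well_founded R)
  (R_trans : forall u v w, R u v -> R v w -> R u w)
  (R_total : forall u v, R u v \/ u = v \/ R v u).

Definition rank : U -> T :=
  Fix R_wf (fun _ => T) (fun w rec => least (fun t => ~ exists v (h : R v w), rec v h = t)).

Definition rank_unattained (w : U) (t : T) : Prop := ~ exists v, R v w /\ rank v = t.

Lemma rank_eq w : rank w = least (rank_unattained w).
Proof.
  unfold rank at 1; rewrite Fix_eq.
  - f_equal; apply functional_extensionality; intro t; apply propositional_extensionality.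
    split; intros H [v [h e]]; apply H; exists v.
    + exists h; exact e.
    + split; [exact h | exact e].
  - intros x f1 f2 Hf; f_equal; apply functional_extensionality; intro t.
    apply propositional_extensionality; split; intros H [v [h e]]; apply H; exists v, h;
      [rewrite Hf | rewrite <- Hf]; exact e.
Qed.

Lemma rank_spec w t : rank_unattained w t ->
  le lt (rank w) t /\ rank_unattained w (rank w) /\
  forall s, lt s (rank w) -> exists v, R v w /\ rank v = s.
Proof.
  intros Ht; rewrite rank_eq.
  destruct (least_spec (rank_unattained w)) as [S1 S2]; [eauto|].
  split; [now apply least_le | split; [exact S1|]].
  intros s Hs; apply NNPP; intros Hn; exact (S2 s Hn Hs).
Qed.

Lemma rank_lt_of_R v w t : rank_unattained w t -> R v w -> lt (rank v) (rank w).
Proof.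
  intros Ht Hvw.
  assert (Hvt : rank_unattained v t) by (intros [u [Huv Hu]]; apply Ht; eauto).
  destruct (rank_spec w t Ht) as [_ [Hw _]]; destruct (rank_spec v t Hvt) as [_ [_ Hv]].
  destruct (lt_trichotomy (rank v) (rank w)) as [H|[H|H]]; auto; exfalso.
  - apply Hw; eauto.
  - destruct (Hv _ H) as [u [Huv Hu]]; apply Hw; eauto.
Qed.

Lemma rank_injects (W : U -> Prop) k : is_card lt k ->
  (forall w, W w -> exists b, lt b k /\ injects (fun v => R v w) (below lt b)) ->
  injects W (below lt k).
Proof.
  intros Hk Hseg.
  assert (Hfree : forall w, W w -> exists t, lt t k /\ rank_unattained w t).
  { intros w Hw; apply NNPP; intros Hn.
    destruct (Hseg w Hw) as [b [Hb Hinj]].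
    apply (Hk b Hb), (injects_trans _ (fun v => R v w)); [|exact Hinj].
    assert (Hpick : forall t, lt t k -> exists v, R v w /\ rank v = t).
    { intros t Ht; apply NNPP; intros Hn2; apply Hn; eauto. }
    exists (fun t => epsilon (inhabits w) (fun v => R v w /\ rank v = t)); split.
    - intros t Ht; apply (epsilon_spec (inhabits w) (fun v => R v w /\ rank v = t)), Hpick, Ht.
    - intros x y Hx Hy E.
      rewrite <- (proj2 (epsilon_spec (inhabits w) (fun v => R v w /\ rank v = x) (Hpick x Hx))),
              <- (proj2 (epsilon_spec (inhabits w) (fun v => R v w /\ rank v = y) (Hpick y Hy))), E.
      reflexivity. }
  exists rank; split.
  - intros w Hw; destruct (Hfree w Hw) as [t [Ht Hu]].
    eapply le_lt_trans; [apply (rank_spec w t Hu) | exact Ht].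
  - intros x y Hx Hy E.
    destruct (Hfree x Hx) as [tx [_ Hux]]; destruct (Hfree y Hy) as [ty [_ Huy]].
    destruct (R_total x y) as [H|[H|H]]; auto; exfalso.
    + apply (rank_lt_of_R x y ty Huy) in H; rewrite E in H; exact (lt_irrefl _ H).
    + apply (rank_lt_of_R y x tx Hux) in H; rewrite E in H; exact (lt_irrefl _ H).
Qed.

End Rank.

Definition max_pair (u : T * T) : T := max_ord (fst u) (snd u).

Definition godel_lt (u v : T * T) : Prop :=
  lt (max_pair u) (max_pair v) \/
  (max_pair u = max_pair v /\
   (lt (fst u) (fst v) \/ (fst u = fst v /\ lt (snd u) (snd v)))).

Lemma godel_lt_wf : well_founded godel_lt.
Proof.
  assert (H : forall a x y, max_ord x y = a -> Acc godel_lt (x, y)).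
  { intro a; induction a as [a IHa] using (well_founded_ind lt_wf).
    intro x; induction x as [x IHx] using (well_founded_ind lt_wf).
    intro y; induction y as [y IHy] using (well_founded_ind lt_wf).
    intros Ha; constructor; intros [u v] Huv; unfold godel_lt, max_pair in Huv; simpl in Huv.
    destruct Huv as [Huv|[E [Huv|[<- Huv]]]].
    - apply (IHa (max_ord u v)); [rewrite <- Ha; exact Huv | reflexivity].
    - apply (IHx u Huv v); congruence.
    - apply (IHy v Huv); congruence. }
  intros [x y]; eapply H; reflexivity.
Qed.

Lemma godel_lt_trans u v w : godel_lt u v -> godel_lt v w -> godel_lt u w.
Proof.
  unfold godel_lt; intros [H1|[E1 H1]] [H2|[E2 H2]].
  - left; eapply lt_trans; eauto.
  - left; rewrite <- E2; exact H1.
  - left; rewrite E1; exact H2.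
  - right; split; [congruence|].
    destruct H1 as [H1|[F1 H1]]; destruct H2 as [H2|[F2 H2]].
    + left; eapply lt_trans; eauto.
    + left; rewrite <- F2; exact H1.
    + left; rewrite F1; exact H2.
    + right; split; [congruence | eapply lt_trans; eauto].
Qed.

Lemma godel_lt_total u v : godel_lt u v \/ u = v \/ godel_lt v u.
Proof.
  unfold godel_lt.
  destruct (lt_trichotomy (max_pair u) (max_pair v)) as [H|[H|H]]; [tauto | | tauto].
  pose proof (eq_sym H) as H'.
  destruct (lt_trichotomy (fst u) (fst v)) as [H1|[H1|H1]]; [tauto | | tauto].
  pose proof (eq_sym H1) as H1'.
  destruct (lt_trichotomy (snd u) (snd v)) as [H2|[H2|H2]]; [tauto | | tauto].
  right; left; destruct u, v; simpl in *; congruence.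
Qed.

Lemma godel_lt_components v w : godel_lt v w ->
  le lt (fst v) (max_pair w) /\ le lt (snd v) (max_pair w).
Proof.
  intros Hvw.
  assert (Hm : le lt (max_pair v) (max_pair w))
    by (destruct Hvw as [H|[H _]]; [now left | now right]).
  split; eapply le_trans; [apply max_ord_ge_l | exact Hm | apply max_ord_ge_r | exact Hm].
Qed.

Definition square_injects (k : T) : Prop :=
  injects (fun q : T * T => lt (fst q) k /\ lt (snd q) k) (below lt k).

(* Every Gödel initial segment of k × k lies in some d × d with d < k, and |d| · |d| < k
   either because |d| is finite or by induction. *)
Lemma hessenberg k : is_card lt k -> le lt omega_ord k -> square_injects k.
Proof.
  induction k as [k IH] using (well_founded_ind lt_wf); intros Hk Hom.
  apply (rank_injects godel_lt_wf godel_lt_trans godel_lt_total _ _ Hk).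
  intros w [Hw1 Hw2].
  destruct (infinite_card_limit k (max_pair w) Hk Hom (max_ord_lt _ _ _ Hw1 Hw2))
    as [d [Hwd Hdk]].
  set (c := card_of d).
  assert (Hseg : injects (fun v => godel_lt v w)
                   (fun q : T * T => below lt c (fst q) /\ below lt c (snd q))).
  { eapply injects_trans; [| exact (injects_prod _ _ _ _ (injects_card_of d) (injects_card_of d))].
    apply (injects_subset_l _ (fun q : T * T => below lt d (fst q) /\ below lt d (snd q)));
      [| apply injects_refl].
    intros v Hv; destruct (godel_lt_components v w Hv); split; eapply le_lt_trans; eauto. }
  assert (Hck : lt c k) by (eapply le_lt_trans; [apply card_of_le | exact Hdk]).
  destruct (classic (lt c omega_ord)) as [Hfin|Hinf].
  - apply below_omega in Hfin as [n En]; exists (nth_ord (n * n)); split.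
    + eapply lt_le_trans; [apply nth_ord_lt_omega | exact Hom].
    + eapply injects_trans; [exact Hseg|]; rewrite En; apply finite_square_injects.
  - exists c; split; [exact Hck|].
    eapply injects_trans; [exact Hseg|].
    apply IH; [exact Hck | apply card_of_is_card | now apply not_lt_le].
Qed.

(* x is coded by the pair (index of a piece containing x, position of x in that piece). *)
Lemma union_injects {I : Type} (A : I -> Prop) (F : I -> T -> Prop) k :
  square_injects k -> injects A (below lt k) ->
  (forall i, A i -> injects (F i) (below lt k)) ->
  injects (fun x => exists i, A i /\ F i x) (below lt k).
Proof.
  intros [p [pm pi]] [g [gm gi]] HF.
  destruct (classic (inhabited I)) as [[i0]|nI].
  2: { exists (fun x => x); split; [intros x [i _] | intros x y [i _]];
         exfalso; exact (nI (inhabits i)). }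
  assert (Hh : forall i, exists h : T -> T, A i -> (forall x, F i x -> lt (h x) k) /\
      (forall x y, F i x -> F i y -> h x = h y -> x = y)).
  { intro i; destruct (classic (A i)) as [Ai|nAi].
    - destruct (HF i Ai) as [h Hh]; exists h; auto.
    - exists (fun x => x); tauto. }
  destruct (choice _ Hh) as [h hs].
  set (sel := fun x => epsilon (inhabits i0) (fun i => A i /\ F i x)).
  assert (ss : forall x, (exists i, A i /\ F i x) -> A (sel x) /\ F (sel x) x).
  { intros x Hx; apply (epsilon_spec (inhabits i0) (fun i => A i /\ F i x)), Hx. }
  exists (fun x => p (g (sel x), h (sel x) x)); split.
  - intros x Hx; destruct (ss x Hx) as [S1 S2]; apply pm; simpl; split.
    + apply gm, S1.
    + apply (hs _ S1), S2.
  - intros x y Hx Hy E; destruct (ss x Hx) as [S1 S2], (ss y Hy) as [S3 S4].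
    apply pi in E; simpl;
      [| split; [apply gm | apply (hs _ S1)] | split; [apply gm | apply (hs _ S3)]]; auto.
    injection E; intros E2 E1; apply gi in E1; auto.
    rewrite <- E1 in E2, S4; apply (hs _ S1); auto.
Qed.

Lemma union2_injects (A B : T -> Prop) k : square_injects k -> le lt omega_ord k ->
  injects A (below lt k) -> injects B (below lt k) -> injects (fun x => A x \/ B x) (below lt k).
Proof.
  intros Hk Hom HA HB.
  apply (injects_subset_l _ (fun x => exists b : bool, True /\ (if b then A x else B x))).
  { intros x [H|H]; [exists true | exists false]; auto. }
  apply union_injects; auto.
  - exists (fun b : bool => nth_ord (if b then 0 else 1)); split.
    + intros b _; eapply lt_le_trans; [apply nth_ord_lt_omega | exact Hom].
    + intros [|] [|] _ _ E; auto; apply nth_ord_inj in E; discriminate.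
  - intros [|] _; auto.
Qed.

Lemma omega_union_injects (F : nat -> T -> Prop) k : square_injects k -> le lt omega_ord k ->
  (forall n, injects (F n) (below lt k)) -> injects (fun x => exists n, F n x) (below lt k).
Proof.
  intros Hk Hom HF.
  apply (injects_subset_l _ (fun x => exists n, True /\ F n x)); [intros x [n H]; eauto|].
  apply union_injects; auto.
  eapply injects_below_mono; [exact Hom | apply nat_injects_omega].
Qed.

(** * Cofinality *)

Lemma is_cf_is_card a k : is_cf lt a k -> is_card lt k.
Proof.
  intros [[X [H1 H2]] H3] b Hb Hc; apply (H3 b Hb); exists X; split; auto.
  eapply injects_trans; eauto.
Qed.

Definition cof (a : T) : T :=
  least (fun k => exists X, cofinal_in lt a X /\ card_le X (below lt k)).

Lemma cof_spec a : is_cf lt a (cof a) /\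
  exists X, cofinal_in lt a X /\ card_le X (below lt (cof a)).
Proof.
  set (P := fun k => exists X, cofinal_in lt a X /\ card_le X (below lt k)).
  destruct (least_spec P) as [L1 L2].
  { exists a, (below lt a); split; [split|].
    - unfold below; auto.
    - intros b Hb; exists b; split; [exact Hb | apply le_refl].
    - apply injects_refl. }
  split; [split|]; [exact L1 | intros k' Hk' Hn; exact (L2 k' Hn Hk') | exact L1].
Qed.

Definition cof_set (a : T) : T -> Prop :=
  epsilon (inhabits (below lt a))
    (fun X => cofinal_in lt a X /\ card_le X (below lt (cof a))).

Lemma cof_set_spec a : cofinal_in lt a (cof_set a) /\ card_le (cof_set a) (below lt (cof a)).
Proof.
  apply (epsilon_spec (inhabits (below lt a))
           (fun X => cofinal_in lt a X /\ card_le X (below lt (cof a)))), cof_spec.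
Qed.

Lemma card_le_sum_of_max (X : T -> Prop) k nu :
  injects X (below lt (max_ord k nu)) -> card_le_sum lt X k nu.
Proof.
  intros HX; destruct (max_ord_cases k nu) as [E|E]; rewrite E in HX.
  - exists X, (fun _ => False); split; [now left | split; [exact HX|]].
    exists (fun x => x); split; intros; contradiction.
  - exists (fun _ => False), X; split; [now right | split; [|exact HX]].
    exists (fun x => x); split; intros; contradiction.
Qed.

(** * Closures *)

Definition closure_in (a : T) (X : T -> Prop) (x : T) : Prop :=
  lt x a /\ (X x \/ sup_self lt X x).

Lemma closure_in_lt a X x : closure_in a X x -> lt x a.
Proof. intros [H _]; exact H. Qed.

Lemma closure_in_base a (X : T -> Prop) x : X x -> lt x a -> closure_in a X x.
Proof. split; auto. Qed.

Lemma closure_in_closed a X x : lt x a -> sup_self lt (closure_in a X) x -> closure_in a X x.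
Proof.
  intros Hx Hs; split; auto; right; intros b Hb.
  destruct (Hs b Hb) as [g [[_ [Hg|Hg]] [H1 H2]]]; eauto.
  destruct (Hg b H1) as [g' [G1 [G2 G3]]]; exists g'; split; [|split]; eauto using lt_trans.
Qed.

(* A new limit point z is sent to the least element of X above it; between two new limit
   points there is a point of X, so this map is injective. *)
Lemma new_limit_points_injects a (X : T -> Prop) :
  (forall b, lt b a -> exists g, X g /\ le lt b g) ->
  injects (fun x => lt x a /\ sup_self lt X x /\ ~ X x) X.
Proof.
  intros Hcof.
  set (next := fun x => least (fun g => X g /\ le lt x g)).
  assert (Hnext : forall x, lt x a -> (X (next x) /\ le lt x (next x)) /\
      forall z, X z /\ le lt x z -> ~ lt z (next x)).
  { intros x Hx; apply (least_spec (fun g => X g /\ le lt x g)), Hcof, Hx. }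
  assert (Hmono : forall x y, lt x a -> lt y a -> sup_self lt X y -> lt x y ->
                    lt (next x) (next y)).
  { intros x y Hx Hy Hsy Hxy; destruct (Hsy x Hxy) as [g [G1 [G2 G3]]].
    apply (le_lt_trans _ g).
    - apply not_lt_le, (proj2 (Hnext x Hx)); split; [exact G1 | now left].
    - eapply lt_le_trans; [exact G3 | apply (Hnext y Hy)]. }
  exists next; split.
  - intros x [Hx _]; apply (Hnext x Hx).
  - intros x y [Hx [Hsx _]] [Hy [Hsy _]] E.
    destruct (lt_trichotomy x y) as [H|[H|H]]; auto; exfalso.
    + apply (lt_neq _ _ (Hmono x y Hx Hy Hsy H)), E.
    + apply (lt_neq _ _ (Hmono y x Hy Hx Hsx H)); symmetry; exact E.
Qed.

Lemma closure_in_injects a (X : T -> Prop) k :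
  (forall b, lt b a -> exists g, X g /\ le lt b g) ->
  square_injects k -> le lt omega_ord k -> injects X (below lt k) ->
  injects (closure_in a X) (below lt k).
Proof.
  intros Hcof Hk Hom HX.
  apply (injects_subset_l _ (fun x => X x \/ (lt x a /\ sup_self lt X x /\ ~ X x))).
  { intros x [Hx [H|H]]; [now left | destruct (classic (X x)); [now left | now right]]. }
  apply union2_injects; auto.
  eapply injects_trans; [apply new_limit_points_injects, Hcof | exact HX].
Qed.

(* Since cf(d) is uncountable, a countable set of bounds below d is bounded below d. *)
Lemma sup_self_countable_union d (A : nat -> T -> Prop) : is_cf lt d sigma ->
  sup_self lt (fun x => exists n, A n x) d -> exists n, sup_self lt (A n) d.
Proof.
  intros Hcf Hs; apply NNPP; intros Hn.
  assert (Hb : forall n, exists b, lt b d /\ forall g, A n g -> lt b g -> lt g d -> False).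
  { intro n; apply NNPP; intros Hb; apply Hn; exists n; intros b Hbd.
    apply NNPP; intros Hg; apply Hb; exists b; split; eauto. }
  destruct (choice _ Hb) as [b bs].
  apply (proj2 Hcf omega_ord omega_lt_sigma); exists (fun y => exists n, y = b n); split.
  - split.
    + intros y [n ->]; apply bs.
    + intros c Hc; destruct (Hs c Hc) as [g [[n Ag] [G1 G2]]].
      exists (b n); split; [eauto|]; left.
      apply (lt_le_trans _ g); auto.
      apply not_lt_le; intros H; apply (proj2 (bs n) g); auto.
  - exists (fun y => nth_ord (epsilon (inhabits 0) (fun n => y = b n))); split.
    + intros y _; apply nth_ord_lt_omega.
    + intros x y Hx Hy E; apply nth_ord_inj in E.
      rewrite (epsilon_spec (inhabits 0) (fun n => x = b n) Hx),
              (epsilon_spec (inhabits 0) (fun n => y = b n) Hy), E; reflexivity.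
Qed.

(** * The ladder closure *)

Section LadderClosure.
Variables mu_ mup : nat -> T.
Hypothesis mu_increasing : forall i j, i < j -> lt (mu_ i) (mu_ j).
Hypothesis mup_csucc : forall m, csucc lt (mu_ m) (mup m).
Hypothesis sigma_lt_mu0 : lt sigma (mu_ 0).
Variables (Sset : T -> Prop) (c0 : T -> T -> T) (C : T -> T -> Prop).
Hypothesis Sset_cf : forall d, Sset d -> is_cf lt d sigma.
Hypothesis c0_club : forall d, Sset d ->
  club_in lt d (fun x => exists z, lt z sigma /\ x = c0 d z).
Hypothesis C_club : forall d, Sset d -> club_in lt d (C d).
Hypothesis C_interval_card : forall d, Sset d -> forall eps m, lt eps sigma ->
  card_le (fun x => C d x /\ inI lt c0 d eps m x) (below lt (mup m)).

Lemma mu_le_mu i m : i <= m -> le lt (mu_ i) (mu_ m).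
Proof.
  intros H; apply Nat.lt_eq_cases in H as [H| ->]; [left; now apply mu_increasing | apply le_refl].
Qed.

Lemma mu_lt_mup m : lt (mu_ m) (mup m).
Proof.
  apply NNPP; intros H; apply (proj1 (mup_csucc m)).
  apply (injects_subset_r _ (below lt (mup m))); [|apply injects_refl].
  intros x; apply below_mono, not_lt_le, H.
Qed.

Lemma mup_le_mup i m : i <= m -> le lt (mup i) (mup m).
Proof.
  intros H; apply not_lt_le; intros Hlt; apply (proj1 (mup_csucc m)).
  eapply injects_below_mono; [apply mu_le_mu, H | exact (proj2 (mup_csucc i) _ Hlt)].
Qed.

Lemma sigma_lt_mup m : lt sigma (mup m).
Proof.
  eapply lt_trans; [exact sigma_lt_mu0|].
  eapply le_lt_trans; [apply mu_le_mu, Nat.le_0_l | apply mu_lt_mup].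
Qed.

Lemma mup_is_card m : is_card lt (mup m).
Proof.
  intros b Hb Hc; apply (proj1 (mup_csucc m)).
  eapply injects_trans; [exact Hc | exact (proj2 (mup_csucc m) b Hb)].
Qed.

Definition size_bound (a : T) (m : nat) : T := max_ord (cof a) (mup m).

Lemma mup_le_size_bound a m : le lt (mup m) (size_bound a m).
Proof. apply max_ord_ge_r. Qed.

Lemma omega_le_size_bound a m : le lt omega_ord (size_bound a m).
Proof.
  left; eapply lt_le_trans; [| apply mup_le_size_bound].
  eapply lt_trans; [apply omega_lt_sigma | apply sigma_lt_mup].
Qed.

Lemma size_bound_square a m : square_injects (size_bound a m).
Proof.
  apply hessenberg; [| apply omega_le_size_bound].
  destruct (max_ord_cases (cof a) (mup m)) as [E|E]; unfold size_bound; rewrite E.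
  - exact (is_cf_is_card _ _ (proj1 (cof_spec a))).
  - apply mup_is_card.
Qed.

Lemma size_bound_mono a m : le lt (size_bound a m) (size_bound a (S m)).
Proof. apply max_ord_mono_r, mup_le_mup, Nat.le_succ_diag_r. Qed.

Lemma Cm_lt d m x : Sset d -> Cm lt sigma c0 C d m x -> lt x d.
Proof.
  intros Hd [[z [Hz ->]]|[eps [i [_ [_ [HC _]]]]]].
  - apply (proj1 (proj1 (c0_club d Hd))); eauto.
  - apply (proj1 (proj1 (C_club d Hd))), HC.
Qed.

Lemma Cm_injects d m k : Sset d -> square_injects k -> le lt (mup m) k ->
  injects (Cm lt sigma c0 C d m) (below lt k).
Proof.
  intros Hd Hk Hmk.
  assert (Hsk : lt sigma k) by (eapply lt_le_trans; [apply sigma_lt_mup | exact Hmk]).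
  assert (Hom : le lt omega_ord k) by (left; eapply lt_trans; [apply omega_lt_sigma | exact Hsk]).
  apply union2_injects; auto.
  - exists (fun x => epsilon (inhabits sigma) (fun z => lt z sigma /\ x = c0 d z)); split.
    + intros x Hx; eapply lt_trans; [apply (epsilon_spec _ _ Hx) | exact Hsk].
    + intros x y Hx Hy E.
      rewrite (proj2 (epsilon_spec (inhabits sigma) (fun z => lt z sigma /\ x = c0 d z) Hx)),
              (proj2 (epsilon_spec (inhabits sigma) (fun z => lt z sigma /\ y = c0 d z) Hy)), E.
      reflexivity.
  - apply (injects_subset_l _
      (fun x => exists q : T * nat, (lt (fst q) sigma /\ snd q <= m) /\
                  (C d x /\ inI lt c0 d (fst q) (snd q) x))).
    { intros x [eps [i [H1 [H2 H3]]]]; exists (eps, i); simpl; tauto. }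
    apply union_injects; auto.
    + destruct Hk as [p [pm pi]].
      assert (Hpair : forall q : T * nat,
                lt (fst q) sigma -> lt (fst q) k /\ lt (nth_ord (snd q)) k).
      { intros q Hq; split; [eapply lt_trans; eauto|].
        eapply lt_le_trans; [apply nth_ord_lt_omega | exact Hom]. }
      exists (fun q => p (fst q, nth_ord (snd q))); split.
      * intros q [Hq _]; apply pm, Hpair, Hq.
      * intros [e1 i1] [e2 i2] [Q1 _] [Q2 _] E; simpl in *.
        apply pi in E; [| apply (Hpair (e1, i1) Q1) | apply (Hpair (e2, i2) Q2)].
        injection E; intros E2 E1; apply nth_ord_inj in E2; subst; reflexivity.
    + intros [eps i] [Q1 Q2]; simpl in *.
      eapply injects_below_mono; [| apply (C_interval_card d Hd eps i Q1)].
      eapply le_trans; [apply mup_le_mup, Q2 | exact Hmk].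
Qed.

Definition add_ladders (a : T) (m : nat) (A : T -> Prop) : T -> Prop :=
  closure_in a (fun x => A x \/ exists d, (Sset d /\ A d) /\ Cm lt sigma c0 C d m x).

Fixpoint stage (a : T) (m : nat) (B : T -> Prop) (n : nat) : T -> Prop :=
  match n with
  | O => closure_in a B
  | S n => add_ladders a m (stage a m B n)
  end.

Definition ladder_closure (a : T) (m : nat) (B : T -> Prop) : T -> Prop :=
  closure_in a (fun x => exists n, stage a m B n x).

Lemma stage_closed a m B n x : lt x a -> sup_self lt (stage a m B n) x -> stage a m B n x.
Proof. destruct n; apply closure_in_closed. Qed.

Lemma stage_base a m B n x : B x -> lt x a -> stage a m B n x.
Proof. intros HB Hx; induction n; apply closure_in_base; auto. Qed.

Section Bounds.
Variables (a : T) (m : nat) (B : T -> Prop) (k : T).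
Hypotheses (B_cofinal : forall b, lt b a -> exists g, B g /\ lt g a /\ le lt b g)
  (k_square : square_injects k) (omega_le_k : le lt omega_ord k) (mup_le_k : le lt (mup m) k)
  (B_small : injects B (below lt k)).

Lemma stage_injects n : injects (stage a m B n) (below lt k).
Proof.
  induction n as [|n IH]; apply closure_in_injects; auto.
  - intros b Hb; destruct (B_cofinal b Hb) as [g [G1 [_ G3]]]; eauto.
  - intros b Hb; destruct (B_cofinal b Hb) as [g [G1 [G2 G3]]].
    exists g; split; [left; now apply stage_base | exact G3].
  - apply union2_injects, union_injects; auto.
    + apply (injects_subset_l _ (stage a m B n)); [intros x [_ H]; exact H | exact IH].
    + intros d [Hd _]; now apply Cm_injects.
Qed.

Lemma ladder_closure_injects : injects (ladder_closure a m B) (below lt k).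
Proof.
  apply closure_in_injects; auto.
  - intros b Hb; destruct (B_cofinal b Hb) as [g [G1 [G2 G3]]].
    exists g; split; [exists 0; now apply stage_base | exact G3].
  - apply omega_union_injects; auto; exact stage_injects.
Qed.

End Bounds.

(* A limit d of the union of the stages is, as cf(d) > ω, a limit and hence a member of a
   single stage; C_d[m] then enters at the next stage. *)
Lemma ladder_closure_Cm a m B d x : Sset d -> ladder_closure a m B d ->
  Cm lt sigma c0 C d m x -> ladder_closure a m B x.
Proof.
  intros Hd [Hda Hdd] Hx.
  assert (Hstage : exists n, stage a m B n d).
  { destruct Hdd as [H|H]; [exact H|].
    destruct (sup_self_countable_union _ _ (Sset_cf d Hd) H) as [n Hn].
    exists n; now apply stage_closed. }
  destruct Hstage as [n Hn].
  assert (Hxa : lt x a) by (eapply lt_trans; [eapply Cm_lt; eauto | exact Hda]).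
  apply closure_in_base; auto; exists (S n).
  apply closure_in_base; auto; right; exists d; auto.
Qed.

Fixpoint ladder_seq (a : T) (m : nat) : T -> Prop :=
  match m with
  | O => ladder_closure a O (cof_set a)
  | S m' => ladder_closure a (S m') (fun x => cof_set a x \/ ladder_seq a m' x)
  end.

Lemma cof_set_cofinal a b : lt b a -> exists g, cof_set a g /\ lt g a /\ le lt b g.
Proof.
  intros Hb; destruct (proj2 (proj1 (cof_set_spec a)) b Hb) as [g [G1 G2]].
  exists g; split; [|split]; auto; exact (proj1 (proj1 (cof_set_spec a)) g G1).
Qed.

Lemma ladder_seq_lt a m x : ladder_seq a m x -> lt x a.
Proof. destruct m; apply closure_in_lt. Qed.

Lemma ladder_seq_club a m : club_in lt a (ladder_seq a m).
Proof.
  split; [split|].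
  - apply ladder_seq_lt.
  - intros b Hb; destruct (cof_set_cofinal a b Hb) as [g [G1 [G2 G3]]].
    exists g; split; [|exact G3].
    destruct m; apply closure_in_base; auto; exists 0; apply stage_base; auto.
  - intros x Hx _ Hs; destruct m; now apply closure_in_closed.
Qed.

Lemma ladder_seq_mono a m x : ladder_seq a m x -> ladder_seq a (S m) x.
Proof.
  intros H; assert (Hx : lt x a) by (eapply ladder_seq_lt; eauto).
  apply closure_in_base; [exists 0; apply stage_base; [now right | exact Hx] | exact Hx].
Qed.

Lemma ladder_seq_Cm a m d : Sset d -> ladder_seq a m d ->
  forall x, Cm lt sigma c0 C d m x -> ladder_seq a m x.
Proof. intros Hd Hda x; destruct m; now apply (ladder_closure_Cm _ _ _ d). Qed.

Lemma cof_set_injects a m : injects (cof_set a) (below lt (size_bound a m)).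
Proof. eapply injects_below_mono; [apply max_ord_ge_l | apply cof_set_spec]. Qed.

Lemma ladder_seq_injects a m : injects (ladder_seq a m) (below lt (size_bound a m)).
Proof.
  induction m as [|m IH]; apply ladder_closure_injects;
    auto using size_bound_square, omega_le_size_bound, mup_le_size_bound, cof_set_injects.
  - apply cof_set_cofinal.
  - intros b Hb; destruct (cof_set_cofinal a b Hb) as [g [G1 G2]]; eauto.
  - apply union2_injects; auto using size_bound_square, omega_le_size_bound, cof_set_injects.
    eapply injects_below_mono; [apply size_bound_mono | exact IH].
Qed.

End LadderClosure.
End WellOrder.

Theorem lemma5p6
  (T : Type) (lt : T -> T -> Prop) (mu sigma : T)
  (mu_ : nat -> T) (mup : nat -> T)
  (Sset : T -> Prop) (c0 : T -> T -> T) (C : T -> T -> Prop)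
  (* T, ordered by lt, is lambda = mu^+ *)
  (Hwo : strict_well_order lt)
  (Hlam1 : ~ card_le (fun _ => True) (below lt mu))
  (Hlam2 : forall b, card_le (below lt b) (below lt mu))
  (* mu is a cardinal, the limit of the mu_i *)
  (Hmu : is_card lt mu)
  (Hmu_inc : forall i j, i < j -> lt (mu_ i) (mu_ j))
  (Hmu_reg : forall i, regular lt (mu_ i))
  (Hmu_lt : forall i, lt (mu_ i) mu)
  (Hmu_cof : forall b, lt b mu -> exists i, le lt b (mu_ i))
  (Hmup : forall m, csucc lt (mu_ m) (mup m))
  (* sigma regular, aleph_0 < sigma < mu_0 *)
  (Hsig_reg : regular lt sigma)
  (Hsig_unc : uncountable lt sigma)
  (Hsig_lt : lt sigma (mu_ 0))
  (* S stationary subset of S^lambda_sigma *)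
  (HS_cf : forall d, Sset d -> is_cf lt d sigma)
  (HS_stat : stationary lt Sset)
  (* c0_delta: increasing enumeration of a club of delta of order type sigma *)
  (Hc0_inc : forall d, Sset d -> forall z z', lt z sigma -> lt z' sigma ->
      lt z z' -> lt (c0 d z) (c0 d z'))
  (Hc0_club : forall d, Sset d ->
      club_in lt d (fun x => exists z, lt z sigma /\ x = c0 d z))
  (Hc0_guess : forall E, club lt E ->
      stationary lt (fun d => Sset d /\
        forall z, lt z sigma -> E (c0 d z)))
  (* the sequence C *)
  (HC_club : forall d, Sset d -> club_in lt d (C d))
  (HC_c0 : forall d, Sset d -> forall z, lt z sigma -> C d (c0 d z))
  (HC_card : forall d, Sset d -> forall eps m, lt eps sigma ->
      card_le (fun x => C d x /\ inI lt c0 d eps m x) (below lt (mup m)))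
  (HC_nacc : forall d, Sset d -> forall eps m, lt eps sigma -> forall a,
      nacc lt (C d) a -> inI lt c0 d eps m a ->
      forall k, is_cf lt a k -> lt (mup m) k)
  (HC_guess : forall E, club lt E ->
      stationary lt (fun d => Sset d /\
        forall eps m, lt eps sigma ->
          exists x, E x /\ nacc lt (C d) x /\ inI lt c0 d eps m x)) :
  exists e : T -> nat -> T -> Prop,
    (* generalized C-sequence *)
    (forall a m, club_in lt a (e a m)) /\
    (forall a m x, e a m x -> e a (S m) x) /\
    (forall a m,
      (exists k, is_cf lt a k /\ card_le_sum lt (e a m) k (mup m)) /\
      (forall d, Sset d -> e a m d -> forall x, Cm lt sigma c0 C d m x -> e a m x)).
Proof.
  exists (ladder_seq T lt sigma Sset c0 C); split; [|split].
  - exact (ladder_seq_club T lt Hwo sigma Sset c0 C).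
  - exact (ladder_seq_mono T lt sigma Sset c0 C).
  - intros a m; split.
    + exists (cof T lt sigma a); split; [exact (proj1 (cof_spec T lt Hwo sigma a))|].
      apply card_le_sum_of_max.
      exact (ladder_seq_injects T lt Hwo sigma Hsig_unc mu_ mup Hmu_inc Hmup Hsig_lt
               Sset c0 C HC_card a m).
    + exact (ladder_seq_Cm T lt Hwo sigma Hsig_unc Sset c0 C HS_cf Hc0_club HC_club a m).
Qed.
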